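(* Let $V,V'$ be finite-dimensional complex vector spaces, $G\subset GL(V)$, $G'\subset GL(V')$ finite, and $F:V\to V'$ a holomorphic diffeomorphism mapping $G$-orbits onto $G'$-orbits. Let $f:Z=V/G\to Z'=V'/G'$ be the induced holomorphic diffeomorphism of orbit spaces. Then $f$ maps the isotropy type stratification of $Z$ onto that of $Z'$, and $f_*(D_Z)=D_{Z'}$.
   Context: Orbit spaces $V/G$ carry the quotient topology and the sheaf of $G$-invariant holomorphic functions; a holomorphic diffeomorphism of orbit spaces is an isomorphism of these locally ringed spaces. Isotropy type stratification: strata $Z_{(K)}=\pi(V_{(K)})$ where $V_{(K)}$ is the set of points whose isotropy group is conjugate to $K\subset G$. Reflection divisor: for each reflection hyperplane $H$ (fixed hyperplane of a complex reflection in $G$) let $e_H$ be the order of its pointwise stabiliser in $G$; $D_Z=\sum_S e_S\cdot S$, summed over the distinct hypersurfaces $S=\pi(H)$, with $e_S:=e_H$ (independent of $H$). *)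

From HB Require Import structures.
From mathcomp Require Import all_boot all_order all_algebra.
From mathcomp Require Import all_classical all_reals all_analysis.
From mathcomp Require Import complex.
From mathcomp Require Import finmap.
Import numFieldNormedType.Exports.

Set Implicit Arguments.
Unset Strict Implicit.
Unset Printing Implicit Defensive.

Local Open Scope ring_scope.
Local Open Scope complex_scope.
Local Open Scope classical_set_scope.

(* The complex vector space V = C^n is modelled as column vectors 'cV[R[i]]_n,
   R : realType, so R[i] is the field of complex numbers. *)

Definition fin_linear_group (R : realType) (n : nat) (G : {fset 'M[R[i]]_n}) : Prop :=
  [/\ 1%:M \in G,
      (forall g h, g \in G -> h \in G -> g *m h \in G)
    & (forall g, g \in G -> g \in unitmx)].

(* G-orbit of v; the orbit space Z = V/G is the set of orbits and the quotient
   map pi : V -> Z is v |-> lin_orbit G v. *)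
Definition lin_orbit (R : realType) (n : nat) (G : {fset 'M[R[i]]_n}) (v : 'cV[R[i]]_n)
  : set 'cV[R[i]]_n := [set g *m v | g in [set` G]].

Definition orbit_space (R : realType) (n : nat) (G : {fset 'M[R[i]]_n})
  : set (set 'cV[R[i]]_n) := range (lin_orbit G).

Definition holo_diffeo (R : realType) (n m : nat)
  (F : 'cV[R[i]]_n -> 'cV[R[i]]_m) : Prop :=
  exists Finv : 'cV[R[i]]_m -> 'cV[R[i]]_n,
    [/\ cancel F Finv, cancel Finv F,
        (forall x, differentiable F x) & (forall y, differentiable Finv y)].

Definition induced_map (R : realType) (n m : nat)
  (F : 'cV[R[i]]_n -> 'cV[R[i]]_m) (O : set 'cV[R[i]]_n) : set 'cV[R[i]]_m :=
  F @` O.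

Definition isotropy (R : realType) (n : nat) (G : {fset 'M[R[i]]_n})
  (v : 'cV[R[i]]_n) : {fset 'M[R[i]]_n} :=
  [fset g in G | g *m v == v]%fset.

Definition conj_set (R : realType) (n : nat) (g : 'M[R[i]]_n)
  (K : {fset 'M[R[i]]_n}) : {fset 'M[R[i]]_n} :=
  [fset g *m k *m invmx g | k in K]%fset.

Definition is_subgroup (R : realType) (n : nat) (K G : {fset 'M[R[i]]_n}) : Prop :=
  [/\ (K `<=` G)%fset, 1%:M \in K & (forall g h, g \in K -> h \in K -> g *m h \in K)].

Definition iso_type_set (R : realType) (n : nat) (G K : {fset 'M[R[i]]_n})
  : set 'cV[R[i]]_n :=
  [set v | exists2 g, g \in G & isotropy G v = conj_set g K].

Definition stratum (R : realType) (n : nat) (G K : {fset 'M[R[i]]_n})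
  : set (set 'cV[R[i]]_n) := lin_orbit G @` iso_type_set G K.

Definition strata (R : realType) (n : nat) (G : {fset 'M[R[i]]_n})
  : set (set (set 'cV[R[i]]_n)) :=
  [set stratum G K | K in [set K | is_subgroup K G /\ iso_type_set G K !=set0]].

Definition is_reflection (R : realType) (n : nat) (G : {fset 'M[R[i]]_n})
  (g : 'M[R[i]]_n) : Prop :=
  [/\ g \in G, g != 1%:M & \rank (g - 1%:M) = 1%N].

Definition refl_hyperplane (R : realType) (n : nat) (G : {fset 'M[R[i]]_n})
  (H : set 'cV[R[i]]_n) : Prop :=
  exists2 g, is_reflection G g & H = [set v | g *m v = v].

Definition pointwise_stab (R : realType) (n : nat) (G : {fset 'M[R[i]]_n})
  (H : set 'cV[R[i]]_n) : {fset 'M[R[i]]_n} :=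
  [fset h in G | `[< forall v, H v -> h *m v = v >]]%fset.

Definition e_hyp (R : realType) (n : nat) (G : {fset 'M[R[i]]_n})
  (H : set 'cV[R[i]]_n) : nat := #|` pointwise_stab G H|%fset.

(* The reflection divisor D_Z = sum_S e_S S, represented by its coefficient
   function on subsets T of Z: D_Z(T) = e_H if T = pi(H) for a reflection
   hyperplane H (e_S is independent of the choice of H), and 0 otherwise. *)
Definition refl_divisor (R : realType) (n : nat) (G : {fset 'M[R[i]]_n})
  (T : set (set 'cV[R[i]]_n)) : nat :=
  xget 0%N [set e | exists H, [/\ refl_hyperplane G H, T = lin_orbit G @` H
                                 & e = e_hyp G H]].

From HB Require Import structures.
From mathcomp Require Import all_boot all_order all_algebra.
From mathcomp Require Import all_classical all_reals all_analysis.
From mathcomp Require Import complex.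
From mathcomp Require Import finmap.
Import numFieldNormedType.Exports.
Local Open Scope ring_scope.
Local Open Scope classical_set_scope.
Set Implicit Arguments.
Unset Strict Implicit.
Unset Printing Implicit Defensive.
Import Order.TTheory GRing.Theory Num.Theory.

(* A generic point of V has trivial isotropy, and F keeps it generic: the
   orbit maps force |G| = |G'|.  Given g in G and any x, join a generic y to x
   by a path whose points before x are generic.  Along that part of the path
   the closed sets {F (g p) = h F p}, h in G', are pairwise disjoint and cover
   it, so by connectedness a single h = phi g works on the whole path, and by
   closedness also at x.  Thus F g = phi(g) F on V, which makes phi an
   isomorphism G -> G' under which F transports isotropy groups, strata and
   pointwise stabilisers of hyperplanes.  Differentiating F g = phi(g) F at 0
   conjugates g to phi g, so reflections go to reflections. *)

Lemma exists_index_avoiding (T : eqType) (s : seq T) (bad : T -> nat -> Prop) :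
  (forall t k1 k2, t \in s -> bad t k1 -> bad t k2 -> k1 = k2) ->
  exists k, forall t, t \in s -> ~ bad t k.
Proof.
move=> bad_uniq; apply: contrapT => /forallNP nogood.
have /choice [f fP] : forall k : 'I_(size s).+1, exists t, t \in s /\ bad t k.
  move=> k; have /existsNP [t /not_implyP [ts /contrapT bt]] := nogood k.
  by exists t.
have f_inj : injective f.
  move=> k1 k2 ek; apply/val_inj; have [_ b1] := fP k1; have [s2 b2] := fP k2.
  by apply: (bad_uniq (f k2)) => //; rewrite -ek.
have : (size (map f (enum 'I_(size s).+1)) <= size s)%N.
  apply: uniq_leq_size; first by rewrite map_inj_uniq ?enum_uniq.
  by move=> _ /mapP [k _ ->]; have [] := fP k.
by rewrite size_map size_enum_ord ltnn.
Qed.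

Lemma image_cancel (A B : Type) (f : A -> B) (g : B -> A) (X : set A) :
  cancel f g -> g @` (f @` X) = X.
Proof.
by move=> fK; rewrite image_comp (_ : g \o f = id) ?image_id //; apply/funext.
Qed.

Section LinearAlgebra.
Variable K : fieldType.

Lemma mx_ext_cV m n (A B : 'M[K]_(m, n)) :
  (forall v : 'cV[K]_n, A *m v = B *m v) -> A = B.
Proof.
move=> AB; apply/matrixP => i j.
have := congr1 (fun M : 'cV[K]_m => M i 0) (AB (delta_mx j 0)).
by rewrite -!colE !mxE.
Qed.

Lemma mulmx_cV_neq0 m n (A : 'M[K]_(m, n)) :
  A != 0 -> exists v : 'cV[K]_n, A *m v != 0.
Proof.
move=> A0; apply: contrapT => /forallNP Av0; move/eqP: A0; apply.
by apply: mx_ext_cV => v; rewrite mul0mx; have := Av0 v; case: eqP.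
Qed.

Lemma linear_cV_mx m n (L : {linear 'cV[K]_n -> 'cV[K]_m}) :
  exists A : 'M[K]_(m, n), forall v, L v = A *m v.
Proof.
exists (\matrix_(i, j) L (delta_mx j 0) i 0) => v.
rewrite {1 2}(matrix_sum_delta v) linear_sum mulmx_sumr; apply: eq_bigr => i _.
rewrite linear_sum mulmx_sumr; apply: eq_bigr => j _.
rewrite linearZ -scalemxAr; congr (_ *: _); rewrite (ord1 j) -colE.
by apply/matrixP => k l; rewrite !mxE (ord1 l).
Qed.

Hypothesis natK_inj : injective (fun k : nat => (k%:R : K)).

(* If [a] avoids the kernels of [s] and [b] that of [M0], then for each
   [M] in [s] at most one [a + k.+1 b] lies in [ker M]. *)
Lemma exists_cV_outside_kernels m n (s : seq 'M[K]_(m, n)) :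
  (forall M, M \in s -> M != 0) ->
  exists v : 'cV[K]_n, forall M, M \in s -> M *m v != 0.
Proof.
elim: s => [|M0 s IH] s_neq0; first by exists 0.
have [a a_out] : exists a : 'cV[K]_n, forall M, M \in s -> M *m a != 0.
  by apply: IH => M Ms; apply: s_neq0; rewrite inE Ms orbT.
have [b M0b] := mulmx_cV_neq0 (s_neq0 M0 (mem_head _ _)).
have [M0a|/negPn/eqP M0a] := boolP (M0 *m a != 0).
  by exists a => M; rewrite inE => /orP [/eqP ->|]//; exact: a_out.
pose w k := a + k.+1%:R *: b.
have w_uniq M k1 k2 : M \in s -> M *m w k1 = 0 -> M *m w k2 = 0 -> k1 = k2.
  move=> Ms e1 e2.
  have : (k1.+1%:R - k2.+1%:R : K) *: (M *m b) = 0.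
    have : M *m w k1 - M *m w k2 = 0 by rewrite e1 e2 subrr.
    by rewrite !mulmxDr -!scalemxAr opprD addrACA subrr add0r scalerBl.
  move/eqP; rewrite scaler_eq0 subr_eq0 => /orP [/eqP /natK_inj []//|/eqP Mb].
  move: e1; rewrite /w mulmxDr -scalemxAr Mb scaler0 addr0 => /eqP.
  by rewrite (negbTE (a_out M Ms)).
have [k wk] := @exists_index_avoiding _ s (fun M k => M *m w k = 0) w_uniq.
exists (w k) => M; rewrite inE => /orP [/eqP ->|Ms]; last by apply/eqP/wk.
rewrite mulmxDr M0a add0r -scalemxAr scaler_eq0 negb_or M0b andbT.
by apply/eqP => /(@natK_inj k.+1 0).
Qed.

Lemma exists_free_point n (G : {fset 'M[K]_n}) :
  exists v : 'cV[K]_n, {in G &, injective (fun g => g *m v)}.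
Proof.
pose s := [seq M <- [seq g - h | g <- enum_fset G, h <- enum_fset G] | M != 0].
have [v v_out] : exists v : 'cV[K]_n, forall M, M \in s -> M *m v != 0.
  by apply: exists_cV_outside_kernels => M; rewrite mem_filter => /andP[].
exists v => g h gG hG /= gv_hv; apply/eqP; apply: contraT => gh.
have : g - h \in s.
  rewrite mem_filter subr_eq0 gh /=; apply/allpairsP; exists (g, h) => /=.
  by rewrite gG hG.
by move/v_out; rewrite mulmxBl gv_hv subrr eqxx.
Qed.

End LinearAlgebra.

Lemma natC_inj (R : realType) : injective (fun k : nat => (k%:R : R[i])).
Proof. by move=> k1 k2 /eqP; rewrite eqr_nat => /eqP. Qed.

Section OrbitMap.
Variables (R : realType) (n n' : nat).
Variables (G : {fset 'M[R[i]]_n}) (G' : {fset 'M[R[i]]_n'}).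
Variables (F : 'cV[R[i]]_n -> 'cV[R[i]]_n') (Finv : 'cV[R[i]]_n' -> 'cV[R[i]]_n).
Hypotheses (FK : cancel F Finv) (FinvK : cancel Finv F)
  (F_orbit : forall v, F @` lin_orbit G v = lin_orbit G' (F v)).

Lemma orbit_fwd g v : g \in G -> exists2 h, h \in G' & F (g *m v) = h *m F v.
Proof.
move=> gG; have : lin_orbit G' (F v) (F (g *m v)).
  by rewrite -F_orbit; exists (g *m v) => //; exists g.
by case=> h hG <-; exists h.
Qed.

Lemma orbit_bwd h v : h \in G' -> exists2 g, g \in G & F (g *m v) = h *m F v.
Proof.
move=> hG; have : (F @` lin_orbit G v) (h *m F v) by rewrite F_orbit; exists h.
by case=> _ [g gG <-] e; exists g.
Qed.

Lemma orbit_map_inv w : Finv @` lin_orbit G' w = lin_orbit G (Finv w).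
Proof.
apply/seteqP; split => x.
  case=> _ [h hG <-] <-; have [g gG e] := orbit_bwd (Finv w) hG.
  by exists g => //; rewrite -[LHS]FK e FinvK.
case=> g gG <-; have [h hG e] := orbit_fwd (Finv w) gG.
exists (h *m w); first by exists h.
by move: e; rewrite FinvK => <-; rewrite FK.
Qed.

Lemma imfset_orbit_map v :
  ((fun g => F (g *m v)) @` G)%fset = ((fun h => h *m F v) @` G')%fset.
Proof.
apply/fsetP => w; apply/imfsetP/imfsetP => /= -[k kG ->].
  by have [h hG e] := orbit_fwd v kG; exists h.
by have [g gG e] := orbit_bwd v kG; exists g.
Qed.

Lemma card_le_orbit_map : (#|` G| <= #|` G'|)%N.
Proof.
have [v v_free] := exists_free_point (@natC_inj R) G.
have : #|` ((fun g => F (g *m v)) @` G)%fset| = #|` G|.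
  by apply/eqP/card_in_imfsetP => g h gG hG /= /(can_inj FK); exact: v_free.
by rewrite imfset_orbit_map => <-; apply: leq_imfset_card.
Qed.

End OrbitMap.

Section Topology.
Variable R : realType.
Local Open Scope complex_scope.
Local Notation CC := (R[i] : numFieldType).
Local Notation Vn n := ('cV[R[i]]_n : normedModType R[i]).

Lemma closed_eqfun (T : topologicalType) (K : numFieldType) (V : normedModType K)
  (f g : T -> V) : continuous f -> continuous g -> closed [set t | f t = g t].
Proof.
move=> fc gc; have closed0 : closed [set (0 : V)].
  by apply: accessible_closed_set1; apply: hausdorff_accessible; exact: norm_hausdorff.
rewrite (_ : [set t | f t = g t] = (f \- g) @^-1` [set 0]).
  have fgc : continuous (f \- g) by move=> t; exact: continuousB (fc t) (gc t).
  exact: (continuous_closedP _).1 fgc _ closed0.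
by apply/seteqP; split => t /=; [move=> ->; rewrite subrr|move/subr0_eq].
Qed.

Lemma continuous_realC : continuous (fun r : R => (r%:C : CC)).
Proof.
move=> x; apply/cvgrPdist_lt => e e0.
have /andP[/eqP Ie Re0] :
    (complex.Im e == complex.Im (0 : R[i])) && (complex.Re (0 : R[i]) < complex.Re e).
  by rewrite -ltcE.
have := (@cvgrPdist_lt _ _ _ (nbhs x) _ (@id R) x).1 cvg_id (complex.Re e) Re0.
move=> near_x; apply: (filterS _ (near_x _)) => t /= xt.
clear near_x; case: e e0 Ie Re0 xt => a b /= e0 -> _ xt.
rewrite normc_def /= subrr expr0n addr0 sqrtr_sqr.
by rewrite complexr0 ltcR.
Qed.

Lemma continuous_mx_entries (T : topologicalType) (K : numFieldType) m n
  (f : T -> 'M[K]_(m, n)) :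
  (forall i j, continuous (fun x => f x i j)) -> continuous f.
Proof.
move=> fc x A /= [P P_nbhs PA].
have : \forall y \near x, forall ij : 'I_m * 'I_n, P ij.1 ij.2 (f y ij.1 ij.2).
  by apply: filter_forall => -[i j] /=; exact: (fc i j x (P i j) (P_nbhs i j)).
by apply: filterS => y Py; apply: PA => i j; exact: (Py (i, j)).
Qed.

Lemma continuous_sum (T : topologicalType) (K : numFieldType) (I : Type)
  (r : seq I) (f : I -> T -> K) :
  (forall k, continuous (f k)) -> continuous (fun x => \sum_(k <- r) f k x).
Proof.
move=> fc; elim: r => [|a r IH].
  by rewrite (_ : (fun x => _) = cst 0); [exact: cst_continuous|
    apply/funext => x; rewrite big_nil].
rewrite (_ : (fun x => _) = f a + (fun x => \sum_(k <- r) f k x)).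
  by move=> x; apply: continuousD; [exact: fc|exact: IH].
by apply/funext => x; rewrite big_cons.
Qed.

Lemma continuous_mulmx (K : numFieldType) m n p (A : 'M[K]_(m, n)) :
  continuous (fun v : 'M[K]_(n, p) => A *m v).
Proof.
apply: continuous_mx_entries => i j.
rewrite (_ : (fun x => _) = fun v : 'M[K]_(n, p) => \sum_k A i k * v k j).
  apply: continuous_sum => k x; apply: continuousM; first exact: cst_continuous.
  exact: coord_continuous.
by apply/funext => v; rewrite mxE.
Qed.

(* [bow c] runs from 0 to 1 along a parabola; for 0 < s < 1 the point
   [bow c s] determines [c], so the arcs for distinct [c] meet only at their
   endpoints. *)
Definition bow (c s : R) : R[i] := s +i* (c * s * (1 - s)).

Lemma bow0 c : bow c 0 = 0.
Proof. by rewrite /bow mulr0 mul0r. Qed.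

Lemma bow1 c : bow c 1 = 1.
Proof. by rewrite /bow subrr mulr0. Qed.

Lemma bow_inj c1 c2 s1 s2 : 0 < s1 < 1 -> bow c1 s1 = bow c2 s2 -> c1 = c2.
Proof.
case/andP => s1_gt0 s1_lt1 [<-]; rewrite -!mulrA => /mulIf; apply.
by rewrite mulf_neq0 ?gt_eqF ?subr_gt0.
Qed.

Lemma continuous_bow c : continuous (fun s : R => (bow c s : CC)).
Proof.
have q_cont : continuous (fun s : R => c * s * (1 - s)).
  move=> s; apply: continuousM; first by apply: continuousM;
    [exact: cst_continuous|exact: cvg_id].
  by apply: continuousB; [exact: cst_continuous|exact: cvg_id].
rewrite (_ : (fun s => _) = (fun s : R => s%:C) +
                            (fun s => (c * s * (1 - s))%:C * 'i%C)).
  move=> s; apply: continuousD; first exact: continuous_realC.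
  apply: continuousM; last exact: cst_continuous.
  apply: (@continuous_comp _ _ _ (fun s : R => c * s * (1 - s))
                               (fun r : R => (r%:C : CC))).
    exact: q_cont.
  exact: continuous_realC.
apply/funext => s /=; apply/eqP.
by rewrite eq_complex /= !mulr0 !mul0r !mulr1 !subr0 !addr0 add0r !eqxx.
Qed.

Lemma continuous_bow_path n (y d : 'cV[R[i]]_n) c :
  continuous (fun s : R => (y + bow c s *: d : Vn n)).
Proof.
move=> s; apply: continuousD; first exact: cst_continuous.
by apply: (@continuousZr_tmp _ _ _ (bow c)); exact: continuous_bow.
Qed.

Lemma closed_itvco_end (A : set R) : closed A ->
  (forall s, 0 <= s < 1 -> A s) -> A 1.
Proof.
move=> A_closed A01.
apply: (@closed_cvg _ _ (at_left (1 : R)) _ id A A_closed); last first.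
  exact: cvg_at_left_filter.
near=> s; apply: A01; apply/andP; split.
  by apply/ltW; near: s; apply: nbhs_left_gt.
by near: s; apply: nbhs_left_lt.
Unshelve. all: by end_near.
Qed.

(* [A `&` C i0] is also relatively open in [A]: its complement there is the
   union of the finitely many other [C i]. *)
Lemma connected_sub_closed_cover (T : topologicalType) (I : choiceType)
  (J : {fset I}) (C : I -> set T) (A : set T) (i0 : I) (a0 : T) :
  connected A -> (forall i, closed (C i)) ->
  (forall a, A a -> exists2 i, i \in J & C i a) ->
  (forall a i j, A a -> i \in J -> j \in J -> C i a -> C j a -> i = j) ->
  i0 \in J -> A a0 -> C i0 a0 -> A `<=` C i0.
Proof.
move=> A_conn C_closed A_cover C_disj i0J Aa0 Ca0.
pose U := \bigcup_(i in [set i | i \in J /\ i != i0]) C i.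
suff <- : A `&` C i0 = A by move=> a [].
apply: A_conn; first by exists a0.
- exists (~` U).
    apply: closed_openC; apply: closed_bigcup => //.
    by apply: (@sub_finite_set _ _ [set` J]); [move=> i [] | exact: finite_fset].
  apply/seteqP; split => a [Aa Ca]; split => //.
    by move=> [i [iJ /eqP ii0] Cia]; apply/ii0/(C_disj a).
  have [i iJ Cia] := A_cover a Aa.
  by have [<-|ii0] := eqVneq i i0; last by exfalso; apply: Ca; exists i.
- by exists (C i0).
Qed.

End Topology.

Section FreeBow.
Variables (R : realType) (n : nat).

Lemma bow_kernel_uniq m (M : 'M[R[i]]_(m, n)) (y d : 'cV[R[i]]_n) c1 c2 s1 s2 :
  M *m y != 0 -> 0 <= s1 < 1 ->
  M *m (y + bow c1 s1 *: d) = 0 -> M *m (y + bow c2 s2 *: d) = 0 -> c1 = c2.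
Proof.
move=> My s1I e1 e2.
have : (bow c1 s1 - bow c2 s2) *: (M *m d) = 0.
  have : M *m (y + bow c1 s1 *: d) - M *m (y + bow c2 s2 *: d) = 0.
    by rewrite e1 e2 subrr.
  by rewrite !mulmxDr -!scalemxAr opprD addrACA subrr add0r scalerBl.
move/eqP; rewrite scaler_eq0 subr_eq0 => /orP [/eqP e12|/eqP Md]; last first.
  by move: e1 My; rewrite mulmxDr -scalemxAr Md scaler0 addr0 => ->; rewrite eqxx.
apply: bow_inj e12; case/andP: s1I => s1_ge0 ->; rewrite andbT lt_def s1_ge0 andbT.
by apply: contra My => /eqP s10; move: e1; rewrite s10 bow0 scale0r addr0 => /eqP.
Qed.

Variable G : {fset 'M[R[i]]_n}.

Lemma exists_free_bow (y x : 'cV[R[i]]_n) : {in G &, injective (fun g => g *m y)} ->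
  exists c : R, forall s, 0 <= s < 1 ->
    {in G &, injective (fun g => g *m (y + bow c s *: (x - y)))}.
Proof.
move=> y_free; pose pairs := [seq (g, h) | g <- enum_fset G, h <- enum_fset G].
pose bad (t : 'M[R[i]]_n * 'M[R[i]]_n) k := t.1 != t.2 /\ exists s : R,
  0 <= s < 1 /\ (t.1 - t.2) *m (y + bow k%:R s *: (x - y)) = 0.
have bad_uniq t k1 k2 : t \in pairs -> bad t k1 -> bad t k2 -> k1 = k2.
  case: t => g h /allpairsP [[g1 h1] /= [gG hG [eg eh]]]; subst g1 h1.
  move=> [/= gh [s1 [s1I e1]]] [_ [s2 [_ e2]]].
  have gh_y : (g - h) *m y != 0.
    apply: contra gh; rewrite mulmxBl subr_eq0 => /eqP e.
    by apply/eqP; apply: y_free.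
  by have /eqP := bow_kernel_uniq gh_y s1I e1 e2; rewrite eqr_nat => /eqP.
have [k k_good] := exists_index_avoiding bad_uniq.
exists k%:R => s sI g h gG hG /= e; apply/eqP; apply: contraT => gh.
exfalso; apply: (k_good (g, h)); first by apply/allpairsP; exists (g, h).
by split => //; exists s; split => //; rewrite mulmxBl e subrr.
Qed.

End FreeBow.

Section Intertwiner.
Variables (R : realType) (n n' : nat).
Local Notation Vn n := ('cV[R[i]]_n : normedModType R[i]).
Variables (G : {fset 'M[R[i]]_n}) (G' : {fset 'M[R[i]]_n'}).
Variables (F : 'cV[R[i]]_n -> 'cV[R[i]]_n') (Finv : 'cV[R[i]]_n' -> 'cV[R[i]]_n).
Hypotheses (FK : cancel F Finv) (FinvK : cancel Finv F)
  (F_orbit : forall v, F @` lin_orbit G v = lin_orbit G' (F v))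
  (F_cont : continuous (F : Vn n -> Vn n')).

Lemma card_orbit_map : #|` G| = #|` G'|.
Proof.
apply/eqP; rewrite eqn_leq (card_le_orbit_map FK F_orbit).
exact: card_le_orbit_map FinvK (orbit_map_inv FK FinvK F_orbit).
Qed.

Lemma free_point_map v : {in G &, injective (fun g => g *m v)} ->
  {in G' &, injective (fun h => h *m F v)}.
Proof.
move=> v_free; apply/card_in_imfsetP.
rewrite -(imfset_orbit_map F_orbit) -card_orbit_map.
by apply/card_in_imfsetP => g h gG hG /= /(can_inj FK); exact: v_free.
Qed.

Lemma closed_intertwining_set (P : R -> Vn n) g h : continuous P ->
  closed [set s | F (g *m P s) = h *m F (P s)].
Proof.
move=> P_cont; apply: closed_eqfun => s.
  apply: (@continuous_comp _ _ _ (fun s => (g *m P s : Vn n)) (F : Vn n -> Vn n'));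
    last exact: F_cont.
  apply: (@continuous_comp _ _ _ P (fun v : Vn n => (g *m v : Vn n))).
    exact: P_cont.
  exact: continuous_mulmx.
apply: (@continuous_comp _ _ _ (fun s => (F (P s) : Vn n'))
                            (fun w : Vn n' => (h *m w : Vn n'))).
  apply: (@continuous_comp _ _ _ P (F : Vn n -> Vn n')); [exact: P_cont|exact: F_cont].
exact: continuous_mulmx.
Qed.

Lemma exists_intertwiner g : g \in G ->
  exists2 h, h \in G' & forall x, F (g *m x) = h *m F x.
Proof.
move=> gG; have [y y_free] := exists_free_point (@natC_inj R) G.
have [h hG Fgy] := orbit_fwd F_orbit y gG.
exists h => // x; have [c c_free] := exists_free_bow x y_free.
pose P s : Vn n := y + bow c s *: (x - y).
pose C h' := [set s | F (g *m P s) = h' *m F (P s)].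
have P_cont : continuous P by exact: continuous_bow_path.
have P0 : P 0 = y by rewrite /P bow0 scale0r addr0.
have P1 : P 1 = x by rewrite /P bow1 scale1r addrC subrK.
have C_closed h' : closed (C h') by exact: closed_intertwining_set.
suff onP t : 0 <= t < 1 -> C h t.
  by rewrite -P1; exact: closed_itvco_end (C_closed h) onP.
have : `[0, 1[%classic `<=` C h.
  apply: (connected_sub_closed_cover (J := G') (a0 := 0)) => //.
  - by apply/connected_intervalP; exact: interval_is_interval.
  - move=> s _; have [h' h'G e] := orbit_fwd F_orbit (P s) gG.
    by exists h'.
  - move=> s h1 h2; rewrite /= in_itv /= => sI h1G h2G e1 e2.
    by apply: (free_point_map (c_free s sI)) => //=; rewrite -e1 -e2.
  - by rewrite /= in_itv /= lexx ltr01.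
  - by rewrite /C /= P0.
by move=> onP01 sI; apply: onP01; rewrite /= in_itv.
Qed.

End Intertwiner.

Section Linearization.
Variable R : realType.
Local Notation Vn n := ('cV[R[i]]_n : normedModType R[i]).

Lemma diff_mulmx m (A : 'M[R[i]]_m) (x : Vn m) :
  'd (fun v : Vn m => (A *m v : Vn m)) x = (fun v : Vn m => (A *m v : Vn m))
    :> (Vn m -> Vn m).
Proof.
have A_cont : continuous (fun v : Vn m => (A *m v : Vn m)) by exact: continuous_mulmx.
exact: (@diff_lin _ _ _ (mulmx A)).
Qed.

Lemma differentiable_mulmx m (A : 'M[R[i]]_m) (x : Vn m) :
  differentiable (fun v : Vn m => (A *m v : Vn m)) x.
Proof.
have A_cont : continuous (fun v : Vn m => (A *m v : Vn m)) by exact: continuous_mulmx.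
exact: (@linear_differentiable _ _ _ (mulmx A)).
Qed.

Lemma diff_cancel n n' (F : Vn n -> Vn n') (Finv : Vn n' -> Vn n) (x v : Vn n) :
  cancel F Finv -> differentiable F x -> differentiable Finv (F x) ->
  'd Finv (F x) ('d F x v) = v.
Proof.
move=> FK dF dFinv.
have FinvF : Finv \o F = idfun by apply/funext => y /=; rewrite FK.
have did : 'd (@idfun (Vn n)) x = idfun :> (Vn n -> Vn n).
  by apply: (@diff_lin _ _ _ idfun) => y.
exact: (congr1 (fun f => f v) (etrans (esym (diff_comp dF dFinv))
  (etrans (congr1 (fun f : Vn n -> Vn n => ('d f x : Vn n -> Vn n)) FinvF) did))).
Qed.

Lemma diff_intertwine n n' (F : Vn n -> Vn n') (g : 'M[R[i]]_n) (h : 'M[R[i]]_n')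
  (v : Vn n) : differentiable F 0 -> (forall x, F (g *m x) = h *m F x) ->
  'd F 0 (g *m v) = h *m 'd F 0 v.
Proof.
move=> dF Fgh.
have FgE : F \o (fun x : Vn n => (g *m x : Vn n)) =
           (fun w : Vn n' => (h *m w : Vn n')) \o F.
  by apply/funext => x /=; rewrite Fgh.
have dF' : differentiable F (g *m (0 : Vn n) : Vn n) by rewrite mulmx0.
have := congr1 (fun f => f v)
  (etrans (esym (diff_comp (differentiable_mulmx g 0) dF'))
  (etrans (congr1 (fun f : Vn n -> Vn n' => ('d f 0 : Vn n -> Vn n')) FgE)
          (diff_comp dF (differentiable_mulmx h (F 0))))).
by rewrite /= !diff_mulmx mulmx0.
Qed.

(* The derivative [A] of [F] at 0 is invertible and [A g = h A]. *)
Lemma rank_intertwined_le n n' (F : Vn n -> Vn n') (Finv : Vn n' -> Vn n)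
  (g : 'M[R[i]]_n) (h : 'M[R[i]]_n') :
  cancel F Finv -> cancel Finv F ->
  differentiable F 0 -> differentiable Finv (F 0) ->
  (forall x, F (g *m x) = h *m F x) -> (\rank (h - 1%:M)%R <= \rank (g - 1%:M)%R)%N.
Proof.
move=> FK FinvK dF dFinv Fgh.
have [A dFA] := linear_cV_mx ('d F 0).
have [B dFinvB] := linear_cV_mx ('d Finv (F 0)).
have AB : A *m B = 1%:M.
  apply: mx_ext_cV => w; rewrite mul1mx -mulmxA -dFinvB -dFA.
  have dF' : differentiable F (Finv (F 0)) by rewrite FK.
  by have := diff_cancel w FinvK dFinv dF'; rewrite FK.
have Ag : A *m g = h *m A.
  by apply: mx_ext_cV => v; rewrite -!mulmxA -!dFA (diff_intertwine _ dF Fgh).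
have -> : h - 1%:M = A *m (g - 1%:M) *m B.
  by rewrite mulmxBr mulmxBl mulmx1 AB Ag -mulmxA AB mulmx1.
exact: leq_trans (mxrankM_maxl _ _) (mxrankM_maxr _ _).
Qed.

End Linearization.

Definition intertwining_map (R : realType) (n n' : nat)
  (F : 'cV[R[i]]_n -> 'cV[R[i]]_n') (G : {fset 'M[R[i]]_n}) (G' : {fset 'M[R[i]]_n'})
  (phi : 'M[R[i]]_n -> 'M[R[i]]_n') : Prop :=
  forall g, g \in G -> phi g \in G' /\ forall x, F (g *m x) = phi g *m F x.

Lemma exists_intertwining_map (R : realType) (n n' : nat)
    (G : {fset 'M[R[i]]_n}) (G' : {fset 'M[R[i]]_n'})
    (F : 'cV[R[i]]_n -> 'cV[R[i]]_n') (Finv : 'cV[R[i]]_n' -> 'cV[R[i]]_n) :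
  cancel F Finv -> cancel Finv F ->
  (forall v, F @` lin_orbit G v = lin_orbit G' (F v)) ->
  (forall x, differentiable F x) ->
  exists phi, intertwining_map F G G' phi.
Proof.
move=> FK FinvK F_orbit dF.
have F_cont : continuous
    (F : ('cV[R[i]]_n : normedModType R[i]) -> ('cV[R[i]]_n' : normedModType R[i])).
  by move=> x; apply: differentiable_continuous.
have /choice [phi phiP] : forall g : 'M[R[i]]_n, exists h : 'M[R[i]]_n',
    g \in G -> h \in G' /\ forall x, F (g *m x) = h *m F x.
  move=> g; have [gG|_] := boolP (g \in G); last by exists 0.
  by have [h hG e] := exists_intertwiner FK FinvK F_orbit F_cont gG; exists h.
by exists phi.
Qed.

Section Transfer.
Variables (R : realType) (n n' : nat).
Variables (G : {fset 'M[R[i]]_n}) (G' : {fset 'M[R[i]]_n'}).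
Variables (F : 'cV[R[i]]_n -> 'cV[R[i]]_n') (Finv : 'cV[R[i]]_n' -> 'cV[R[i]]_n).
Variables (phi : 'M[R[i]]_n -> 'M[R[i]]_n') (psi : 'M[R[i]]_n' -> 'M[R[i]]_n).
Hypotheses (G_group : fin_linear_group G) (G'_group : fin_linear_group G')
  (FK : cancel F Finv) (FinvK : cancel Finv F)
  (F_orbit : forall v, F @` lin_orbit G v = lin_orbit G' (F v))
  (phi_F : intertwining_map F G G' phi) (psi_Finv : intertwining_map Finv G' G psi).

Lemma phiG g : g \in G -> phi g \in G'. Proof. by case/phi_F. Qed.
Lemma phiE g : g \in G -> forall x, F (g *m x) = phi g *m F x.
Proof. by case/phi_F. Qed.
Lemma psiG h : h \in G' -> psi h \in G. Proof. by case/psi_Finv. Qed.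
Lemma psiE h : h \in G' -> forall y, Finv (h *m y) = psi h *m Finv y.
Proof. by case/psi_Finv. Qed.

Lemma phiK g : g \in G -> psi (phi g) = g.
Proof.
move=> gG; apply: mx_ext_cV => x.
by rewrite -[x in LHS]FK -psiE ?phiG // -phiE // FK.
Qed.

Lemma psiK h : h \in G' -> phi (psi h) = h.
Proof.
move=> hG; apply: mx_ext_cV => y.
by rewrite -[y in LHS]FinvK -phiE ?psiG // -psiE // FinvK.
Qed.

Lemma phi_inj : {in G &, injective phi}.
Proof. by move=> g h gG hG e; rewrite -(phiK gG) e phiK. Qed.

Lemma phiM g h : g \in G -> h \in G -> phi (g *m h) = phi g *m phi h.
Proof.
move=> gG hG; have [_ GM _] := G_group.
by apply: mx_ext_cV => y; rewrite -[y]FinvK -mulmxA -!phiE ?GM // mulmxA.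
Qed.

Lemma phi1 : phi 1%:M = 1%:M.
Proof.
have [G1 _ _] := G_group; apply: mx_ext_cV => y.
by rewrite -[y]FinvK -phiE // !mul1mx.
Qed.

Lemma fixed_phiE g v : g \in G -> (g *m v = v) <-> (phi g *m F v = F v).
Proof.
move=> gG; rewrite -phiE //; split => [->//|gv].
by rewrite -[LHS]FK gv FK.
Qed.

Lemma isotropy_phi v : isotropy G' (F v) = (phi @` isotropy G v)%fset.
Proof.
apply/fsetP => h; rewrite /isotropy; apply/idP/idP.
  rewrite !inE /= => /andP [hG /eqP hv].
  apply/imfsetP; exists (psi h); last by rewrite psiK.
  by rewrite !inE /= psiG //=; apply/eqP/(fixed_phiE _ (psiG hG)); rewrite psiK.
case/imfsetP => g /=; rewrite !inE /= => /andP [gG /eqP gv] ->.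
by rewrite phiG //=; apply/eqP/(fixed_phiE _ gG).
Qed.

Lemma conj_set_phi g (K : {fset 'M[R[i]]_n}) : g \in G -> (K `<=` G)%fset ->
  (conj_set g K `<=` G)%fset ->
  (phi @` conj_set g K)%fset = conj_set (phi g) (phi @` K)%fset.
Proof.
move=> gG KG gKG; have [_ GM Gu] := G_group; have [_ _ G'u] := G'_group.
have phi_conj k : k \in K ->
    phi (g *m k *m invmx g) = phi g *m phi k *m invmx (phi g).
  move=> kK; have kG : k \in G by apply: (fsubsetP KG).
  have gkG : g *m k *m invmx g \in G by apply: (fsubsetP gKG); apply/imfsetP; exists k.
  have : phi (g *m k *m invmx g) *m phi g = phi g *m phi k.
    by rewrite -!phiM // ?GM // mulmxKV ?Gu.
  by move/(congr1 (mulmx^~ (invmx (phi g)))); rewrite mulmxK ?G'u ?phiG.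
apply/fsetP => h; apply/imfsetP/imfsetP => /=.
  case=> _ /imfsetP [k /= kK ->] ->; exists (phi k); last by rewrite phi_conj.
  by apply/imfsetP; exists k.
case=> _ /imfsetP [k /= kK ->] ->; exists (g *m k *m invmx g); last by rewrite phi_conj.
by apply/imfsetP; exists k.
Qed.

Lemma iso_type_set_phi (K : {fset 'M[R[i]]_n}) v : (K `<=` G)%fset ->
  iso_type_set G K v -> iso_type_set G' (phi @` K)%fset (F v).
Proof.
move=> KG [g gG vK]; exists (phi g); first exact: phiG.
rewrite isotropy_phi vK conj_set_phi // -vK.
by apply/fsubsetP => h; rewrite inE => /andP[].
Qed.

Lemma subgroup_phi (K : {fset 'M[R[i]]_n}) :
  is_subgroup K G -> is_subgroup (phi @` K)%fset G'.
Proof.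
case=> KG K1 KM; split.
- by apply/fsubsetP => _ /imfsetP [k /= kK ->]; apply/phiG/(fsubsetP KG).
- by apply/imfsetP; exists 1%:M; rewrite ?phi1.
- move=> _ _ /imfsetP [k1 /= k1K ->] /imfsetP [k2 /= k2K ->].
  apply/imfsetP; exists (k1 *m k2); first exact: KM.
  by rewrite phiM //; apply: (fsubsetP KG).
Qed.

Lemma imfset_phiK (K : {fset 'M[R[i]]_n}) :
  (K `<=` G)%fset -> (psi @` (phi @` K))%fset = K.
Proof.
move=> KG; apply/fsetP => k; apply/imfsetP/idP => /=.
  by case=> _ /imfsetP [k' /= k'K ->] ->; rewrite phiK //; apply: (fsubsetP KG).
move=> kK; exists (phi k); first by apply/imfsetP; exists k.
by rewrite phiK //; apply: (fsubsetP KG).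
Qed.

Lemma fixed_set_phi g : g \in G ->
  F @` [set v | g *m v = v] = [set w | phi g *m w = w].
Proof.
move=> gG; apply/seteqP; split => w.
  by case=> v /= /(fixed_phiE _ gG) gv <-.
move=> /= gw; exists (Finv w); last exact: FinvK.
by apply/(fixed_phiE _ gG); rewrite FinvK.
Qed.

Lemma pointwise_stab_phi (H : set 'cV[R[i]]_n) :
  pointwise_stab G' (F @` H) = (phi @` pointwise_stab G H)%fset.
Proof.
apply/fsetP => h; rewrite /pointwise_stab; apply/idP/idP.
  rewrite !inE /= => /andP [hG /asboolP hH].
  apply/imfsetP; exists (psi h); last by rewrite psiK.
  rewrite !inE /= psiG //=; apply/asboolP => v Hv.
  by apply/(fixed_phiE _ (psiG hG)); rewrite psiK //; apply: hH; exists v.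
case/imfsetP => g /=; rewrite !inE /= => /andP [gG /asboolP gH] ->.
rewrite phiG //=; apply/asboolP => _ [v Hv <-].
by apply/(fixed_phiE _ gG); apply: gH.
Qed.

Lemma e_hyp_phi (H : set 'cV[R[i]]_n) : e_hyp G' (F @` H) = e_hyp G H.
Proof.
rewrite /e_hyp pointwise_stab_phi; apply/eqP/card_in_imfsetP => g h.
by rewrite !inE /= => /andP [gG _] /andP [hG _]; apply: phi_inj.
Qed.

Lemma orbit_image_phi (H : set 'cV[R[i]]_n) :
  lin_orbit G' @` (F @` H) = induced_map F @` (lin_orbit G @` H).
Proof.
apply/seteqP; split => O; case=> _ [v Hv <-] <-.
  by exists (lin_orbit G v); [exists v|rewrite /induced_map F_orbit].
by exists (F v); [exists v|rewrite /induced_map F_orbit].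
Qed.

Hypotheses (dF : forall x, differentiable F x)
  (dFinv : forall y, differentiable Finv y).

Lemma rank_phi g : g \in G -> \rank (phi g - 1%:M) = \rank (g - 1%:M).
Proof.
move=> gG; apply/eqP; rewrite eqn_leq.
rewrite (rank_intertwined_le FK FinvK (dF 0) (dFinv (F 0)) (phiE gG)) /=.
rewrite -{1}(phiK gG).
exact: rank_intertwined_le FinvK FK (dFinv 0) (dF (Finv 0)) (psiE (phiG gG)).
Qed.

Lemma refl_hyperplane_phi (H : set 'cV[R[i]]_n) :
  refl_hyperplane G H -> refl_hyperplane G' (F @` H).
Proof.
case=> g [gG g1 rk] ->; exists (phi g); last exact: fixed_set_phi.
split; [exact: phiG| |by rewrite rank_phi].
apply: contra g1 => /eqP phig1; apply/eqP.
by rewrite -(phiK gG) phig1 -phi1 phiK //; case: G_group.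
Qed.

Lemma refl_divisor_witness_phi T e :
  (exists H, [/\ refl_hyperplane G H, T = lin_orbit G @` H & e = e_hyp G H]) ->
  exists H, [/\ refl_hyperplane G' H, induced_map F @` T = lin_orbit G' @` H
              & e = e_hyp G' H].
Proof.
case=> H [HG -> ->]; exists (F @` H); split.
- exact: refl_hyperplane_phi.
- by rewrite orbit_image_phi.
- by rewrite e_hyp_phi.
Qed.

End Transfer.

Section Strata.
Variables (R : realType) (n n' : nat).
Variables (G : {fset 'M[R[i]]_n}) (G' : {fset 'M[R[i]]_n'}).
Variables (F : 'cV[R[i]]_n -> 'cV[R[i]]_n') (Finv : 'cV[R[i]]_n' -> 'cV[R[i]]_n).
Variables (phi : 'M[R[i]]_n -> 'M[R[i]]_n') (psi : 'M[R[i]]_n' -> 'M[R[i]]_n).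
Hypotheses (G_group : fin_linear_group G) (G'_group : fin_linear_group G')
  (FK : cancel F Finv) (FinvK : cancel Finv F)
  (F_orbit : forall v, F @` lin_orbit G v = lin_orbit G' (F v))
  (phi_F : intertwining_map F G G' phi) (psi_Finv : intertwining_map Finv G' G psi).

Lemma stratum_phi (K : {fset 'M[R[i]]_n}) : is_subgroup K G ->
  induced_map F @` stratum G K = stratum G' (phi @` K)%fset.
Proof.
move=> K_sub; have [KG _ _] := K_sub.
have [phiKG' _ _] := subgroup_phi G_group FinvK phi_F K_sub.
apply/seteqP; split => O.
  case=> _ [v vK <-] <-; exists (F v).
    by apply: (iso_type_set_phi G_group G'_group FK FinvK phi_F psi_Finv KG).
  by rewrite /induced_map F_orbit.
case=> w wK <-; exists (lin_orbit G (Finv w)).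
  exists (Finv w) => //; rewrite -(imfset_phiK FK phi_F psi_Finv KG).
  by apply: (iso_type_set_phi G'_group G_group FinvK FK psi_Finv phi_F phiKG').
by rewrite /induced_map F_orbit FinvK.
Qed.

Lemma strata_phi S : strata G S -> strata G' (induced_map F @` S).
Proof.
case=> K [K_sub [v vK]] <-; exists (phi @` K)%fset; last by rewrite stratum_phi.
split; first exact: (subgroup_phi G_group FinvK phi_F K_sub).
exists (F v); case: K_sub => KG _ _.
by apply: (iso_type_set_phi G_group G'_group FK FinvK phi_F psi_Finv KG).
Qed.

End Strata.

Theorem corollary5p2 (R : realType) (n n' : nat)
  (G : {fset 'M[R[i]]_n}) (G' : {fset 'M[R[i]]_n'})
  (F : 'cV[R[i]]_n -> 'cV[R[i]]_n') :
  fin_linear_group G -> fin_linear_group G' ->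
  holo_diffeo F ->
  (forall v, F @` lin_orbit G v = lin_orbit G' (F v)) ->
  (* f maps the isotropy type stratification of Z onto that of Z' *)
  ((forall S, strata G S -> strata G' (induced_map F @` S)) /\
   (forall S', strata G' S' -> exists2 S, strata G S & S' = induced_map F @` S)) /\
  (* f_*(D_Z) = D_Z' *)
  (forall T, T `<=` orbit_space G ->
     refl_divisor G' (induced_map F @` T) = refl_divisor G T).
Proof.
move=> G_group G'_group [Finv [FK FinvK dF dFinv]] F_orbit.
have Finv_orbit := orbit_map_inv FK FinvK F_orbit.
have [phi phi_F] := exists_intertwining_map FK FinvK F_orbit dF.
have [psi psi_Finv] := exists_intertwining_map FinvK FK Finv_orbit dFinv.
have inducedK : cancel (induced_map F) (induced_map Finv).
  by move=> O; exact: image_cancel.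
split; [split|].
- exact: (strata_phi G_group G'_group FK FinvK F_orbit phi_F psi_Finv).
- move=> S' S'_strata; exists (induced_map Finv @` S'); last first.
    by rewrite image_cancel // => O; exact: image_cancel.
  exact: (strata_phi G'_group G_group FinvK FK Finv_orbit psi_Finv phi_F S'_strata).
- move=> T _; rewrite /refl_divisor; congr xget; apply/seteqP; split => e.
    move/(refl_divisor_witness_phi G'_group FinvK FK Finv_orbit psi_Finv phi_F dFinv dF).
    by rewrite image_cancel.
  exact: (refl_divisor_witness_phi G_group FK FinvK F_orbit phi_F psi_Finv dF dFinv).
Qed.
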